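(* Let $n\ge2$ and $0\le r_l\le r_u<1$. For all $x,y\in\mathbb{B}^n$ with $r_l\le|x|\le|y|\le r_u$, $$\frac{1+r_l}{2}\,\mathrm{th}\frac{\rho_{\mathbb{B}^n}(x,y)}{2}\le p_{\mathbb{B}^n}(x,y)\le\frac{1+r_u^2}{2\sqrt{1-2r_u+2r_u^2}}\,\mathrm{th}\frac{\rho_{\mathbb{B}^n}(x,y)}{2},$$ and these are the best possible constants depending only on $r_l$ and $r_u$.
   Context: $\mathbb{B}^n$ is the unit ball of $\mathbb{R}^n$. For a domain $G\subsetneq\mathbb{R}^n$ and $x\in G$, $d_G(x)=\inf\{|x-z|:z\in\partial G\}$. The hyperbolic metric of the unit ball satisfies $\mathrm{th}\frac{\rho_{\mathbb{B}^n}(x,y)}{2}=\frac{|x-y|}{\sqrt{|x-y|^2+(1-|x|^2)(1-|y|^2)}}$. The point pair function is $p_G(x,y)=\frac{|x-y|}{\sqrt{|x-y|^2+4d_G(x)d_G(y)}}$. *)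

From HB Require Import structures.
From mathcomp Require Import all_boot all_order all_algebra.
From mathcomp Require Import all_classical all_reals.
Set Implicit Arguments. Unset Strict Implicit. Unset Printing Implicit Defensive.
Import Order.TTheory GRing.Theory Num.Theory.
Local Open Scope ring_scope.
Local Open Scope classical_set_scope.

Definition enorm (R : realType) (n : nat) (x : 'rV[R]_n) : R :=
  Num.sqrt (\sum_(i < n) x ord0 i ^+ 2).

Definition unit_ball (R : realType) (n : nat) : set 'rV[R]_n :=
  [set x | enorm x < 1].
Definition unit_sphere (R : realType) (n : nat) : set 'rV[R]_n :=
  [set z | enorm z = 1].

Definition dB (R : realType) (n : nat) (x : 'rV[R]_n) : R :=
  inf [set enorm (x - z) | z in @unit_sphere R n].

(* th (rho_{B^n}(x,y)/2), by the formula given in the paper *)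
Definition th_rho_half (R : realType) (n : nat) (x y : 'rV[R]_n) : R :=
  enorm (x - y) /
  Num.sqrt (enorm (x - y) ^+ 2 + (1 - enorm x ^+ 2) * (1 - enorm y ^+ 2)).

Definition pB (R : realType) (n : nat) (x y : 'rV[R]_n) : R :=
  enorm (x - y) / Num.sqrt (enorm (x - y) ^+ 2 + 4 * dB x * dB y).

From HB Require Import structures.
From mathcomp Require Import all_boot all_order all_algebra.
From mathcomp Require Import all_classical all_reals.
From mathcomp Require Import ring lra.
Import Order.TTheory GRing.Theory Num.Theory.
Local Open Scope ring_scope.
Local Open Scope classical_set_scope.
Set Implicit Arguments. Unset Strict Implicit. Unset Printing Implicit Defensive.

(* Both quantities depend only on a = |x|, b = |y| and d = |x - y|, because
   d_{B^n}(x) = 1 - |x|.  Writing p = d / sqrt P and th = d / sqrt T with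
     P = d^2 + 4(1-a)(1-b),   T = d^2 + (1-a^2)(1-b^2),
   every comparison p <= c * th becomes, after squaring, the polynomial
   inequality d^2 T <= c^2 d^2 P.
   - Lower bound: T - ((1+rl)/2)^2 P is a sum of visibly nonnegative terms.
   - Upper bound: using d <= a + b, it reduces to the case d = a + b, where
     T/P = (1+ab)^2 / ((2-a-b)^2 + 4ab); this ratio is nondecreasing in each
     variable, hence maximal at a = b = ru, giving the constant of the theorem.
   - Sharpness: antipodal points on the sphere of radius ru realise the upper
     constant exactly, and short chords on spheres of radius close to rl
     approach the lower one. *)

Section EuclideanNorm.
Variables (R : realType) (n : nat).
Implicit Types x y : 'rV[R]_n.

Definition dot x y : R := \sum_(i < n) x ord0 i * y ord0 i.

Lemma enorm_ge0 x : 0 <= enorm x.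
Proof. exact: sqrtr_ge0. Qed.

Lemma enorm_sq x : enorm x ^+ 2 = dot x x.
Proof.
rewrite /enorm sqr_sqrtr; last by apply: sumr_ge0 => i _; rewrite sqr_ge0.
by apply: eq_bigr => i _; rewrite expr2.
Qed.

Lemma enorm_eq0 x : enorm x = 0 -> x = 0.
Proof.
move=> x0; apply/rowP => i; rewrite mxE.
have sq0 : \sum_(j < n) x ord0 j ^+ 2 = 0.
  apply/eqP; rewrite eq_le sumr_ge0 ?andbT => [|j _]; last exact: sqr_ge0.
  by rewrite -sqrtr_eq0; apply/eqP.
have /eqP := psumr_eq0P (P := xpredT) (fun j _ => sqr_ge0 (x ord0 j)) sq0 (i := i) isT.
by rewrite sqrf_eq0 => /eqP.
Qed.

Lemma enormZ x (c : R) : enorm (c *: x) = `|c| * enorm x.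
Proof.
rewrite /enorm -sqrtr_sqr -sqrtrM ?sqr_ge0 //; congr Num.sqrt.
by rewrite mulr_sumr; apply: eq_bigr => i _; rewrite mxE exprMn.
Qed.

Lemma enormN x : enorm (- x) = enorm x.
Proof. by rewrite -scaleN1r enormZ normrN1 mul1r. Qed.

Lemma enorm_sqD x y :
  enorm (x + y) ^+ 2 = enorm x ^+ 2 + 2 * dot x y + enorm y ^+ 2.
Proof.
rewrite !enorm_sq /dot mulr_sumr -!big_split /=.
by apply: eq_bigr => i _; rewrite mxE; ring.
Qed.

(* One half of the Cauchy-Schwarz inequality, obtained by expanding
   the nonnegative quantity |b x - a y|^2 with a = |x|, b = |y|. *)
Lemma dot_le_enorm x y : dot x y <= enorm x * enorm y.
Proof.
have [->|x0] := eqVneq x 0.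
  by rewrite /dot big1 ?mulr_ge0 ?enorm_ge0 // => i _; rewrite mxE mul0r.
have [->|y0] := eqVneq y 0.
  by rewrite /dot big1 ?mulr_ge0 ?enorm_ge0 // => i _; rewrite mxE mulr0.
set a := enorm x; set b := enorm y.
have a0 : 0 < a by rewrite lt_def enorm_ge0 andbT; apply: contra_neq x0; exact: enorm_eq0.
have b0 : 0 < b by rewrite lt_def enorm_ge0 andbT; apply: contra_neq y0; exact: enorm_eq0.
have := sqr_ge0 (enorm (b *: x - a *: y)).
rewrite enorm_sqD enormN !enormZ !gtr0_norm //.
have -> : dot (b *: x) (- (a *: y)) = - (a * b) * dot x y.
  rewrite /dot mulr_sumr; apply: eq_bigr => i _; rewrite !mxE; ring.
have ab0 : 0 < a * b by rewrite mulr_gt0.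
rewrite -/a -/b => h; nra.
Qed.

Lemma enorm_triangle x y : enorm (x + y) <= enorm x + enorm y.
Proof.
rewrite -ler_sqr ?nnegrE ?addr_ge0 ?enorm_ge0 // enorm_sqD.
have := dot_le_enorm x y; lra.
Qed.

Lemma enorm_subr_le x y : enorm (x - y) <= enorm x + enorm y.
Proof. by rewrite -(enormN y) enorm_triangle. Qed.

End EuclideanNorm.

Lemma enorm_delta (R : realType) (n : nat) (i : 'I_n) :
  enorm (delta_mx ord0 i : 'rV[R]_n) = 1.
Proof.
rewrite /enorm (bigD1 i) //= big1 => [|j ji]; last by rewrite mxE (negbTE ji) andbF expr0n.
by rewrite mxE !eqxx expr1n addr0 sqrtr1.
Qed.

Lemma sphere_dist_ge (R : realType) (n : nat) (x z : 'rV[R]_n) :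
  enorm z = 1 -> 1 - enorm x <= enorm (x - z).
Proof.
move=> z1; have := enorm_triangle (z - x) x.
by rewrite subrK z1 -enormN opprB; lra.
Qed.

(* The distance from a point of the ball to the boundary sphere,
   d_{B^n}(x) = 1 - |x|; the infimum is attained at x/|x|. *)
Lemma dB_ball (R : realType) (n : nat) (x : 'rV[R]_n) : (0 < n)%N ->
  enorm x < 1 -> dB x = 1 - enorm x.
Proof.
move=> n0 x1; set E := [set enorm (x - z) | z in @unit_sphere R n].
have lbE : lbound E (1 - enorm x) by move=> _ [z z1 <-]; exact: sphere_dist_ge.
suff Ex : E (1 - enorm x).
  apply/eqP; rewrite eq_le (ge_inf (ex_intro _ _ lbE) Ex) /=.
  exact: lb_le_inf (ex_intro _ _ Ex) lbE.
have [x0|x_neq0] := eqVneq (enorm x) 0.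
  exists (- delta_mx ord0 (Ordinal n0)); first by rewrite /unit_sphere /= enormN enorm_delta.
  by rewrite x0 (enorm_eq0 x0) sub0r opprK enorm_delta subr0.
have xpos : 0 < enorm x by rewrite lt_def x_neq0 enorm_ge0.
exists ((enorm x)^-1 *: x).
  by rewrite /unit_sphere /= enormZ ger0_norm ?invr_ge0 ?enorm_ge0 // mulVf.
rewrite -{1}(scale1r x) -scalerBl enormZ ler0_norm; last first.
  by rewrite subr_le0 invf_ge1 // ltW.
by rewrite opprB mulrBl mulVf // mul1r.
Qed.

Definition plane_point (R : realType) (n : nat) (p q : R) : 'rV[R]_n :=
  \row_(j < n) (if val j == 0%N then p else if val j == 1%N then q else 0).

Lemma plane_pointB (R : realType) (n : nat) (p q p' q' : R) :
  plane_point n p q - plane_point n p' q' = plane_point n (p - p') (q - q').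
Proof.
apply/rowP => j; rewrite !mxE.
by case: ifP => _; [|case: ifP => _]; rewrite ?subrr.
Qed.

Lemma enorm_plane_point (R : realType) (n : nat) (p q : R) : (2 <= n)%N ->
  enorm (plane_point n p q) = Num.sqrt (p ^+ 2 + q ^+ 2).
Proof.
case: n => [|[|m]] // _; rewrite /enorm; congr Num.sqrt.
rewrite big_ord_recl big_ord_recl big1 ?addr0 => [|i _]; rewrite !mxE //=.
by rewrite expr0n.
Qed.

Lemma chord_points (R : realType) (n : nat) (r s : R) : (2 <= n)%N ->
  0 < s -> s <= r -> exists x y : 'rV[R]_n,
    [/\ enorm x = r, enorm y = r, enorm (x - y) = 2 * s & x != y].
Proof.
move=> n2 s0 sr; set a := Num.sqrt (r ^+ 2 - s ^+ 2).
have a2 : a ^+ 2 = r ^+ 2 - s ^+ 2 by rewrite /a sqr_sqrtr //; nra.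
have sqrt_sq (t : R) : 0 <= t -> Num.sqrt (t ^+ 2) = t.
  by move=> t0; rewrite sqrtr_sqr ger0_norm.
have dxy : enorm (plane_point n a (- s) - plane_point n a s) = 2 * s.
  rewrite plane_pointB enorm_plane_point // subrr expr0n add0r.
  by rewrite -opprD sqrrN -mulr2n -mulr_natl sqrt_sq //; lra.
exists (plane_point n a (- s)), (plane_point n a s); split => //.
- by rewrite enorm_plane_point // sqrrN a2 subrK sqrt_sq //; lra.
- by rewrite enorm_plane_point // a2 subrK sqrt_sq //; lra.
- apply/eqP => xy; move: dxy; rewrite xy subrr /enorm big1 ?sqrtr0 => [|i _]; first lra.
  by rewrite mxE expr0n.
Qed.

Section RealInequalities.
Variable R : realType.
Implicit Types a b c d r s u v k P T : R.

Lemma cmp_by_squares u v k : 0 <= u -> 0 <= v -> 0 < k ->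
  ((u <= v) = (u ^+ 2 * k <= v ^+ 2 * k)) * ((u < v) = (u ^+ 2 * k < v ^+ 2 * k)).
Proof. by move=> u0 v0 k0; rewrite ler_pM2r // ltr_pM2r // ler_sqr // ltr_sqr. Qed.

Lemma sqr_scaled_quot c d T : 0 < T -> (c * (d / Num.sqrt T)) ^+ 2 * T = c ^+ 2 * d ^+ 2.
Proof.
move=> T0; rewrite !exprMn exprVn sqr_sqrtr ?ltW // -!mulrA mulVf ?gt_eqF //.
by rewrite mulr1.
Qed.

(* [pp a b d] and [thh a b d] are p_{B^n}(x,y) and th(rho(x,y)/2) as
   functions of a = |x|, b = |y| and d = |x - y|. *)
Definition pp a b d := d / Num.sqrt (d ^+ 2 + 4 * (1 - a) * (1 - b)).
Definition thh a b d := d / Num.sqrt (d ^+ 2 + (1 - a ^+ 2) * (1 - b ^+ 2)).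

Section Comparison.
Variables (a b d : R).
Hypotheses (a0 : 0 <= a) (a1 : a < 1) (b0 : 0 <= b) (b1 : b < 1) (d0 : 0 <= d).

Let P := d ^+ 2 + 4 * (1 - a) * (1 - b).
Let T := d ^+ 2 + (1 - a ^+ 2) * (1 - b ^+ 2).
Let P0 : 0 < P.
Proof. by rewrite /P ltr_wpDl ?sqr_ge0 // -mulrA !mulr_gt0 ?subr_gt0. Qed.
Let T0 : 0 < T.
Proof. by rewrite /T ltr_wpDl ?sqr_ge0 // mulr_gt0 // subr_gt0 expr_lt1. Qed.

Let pp_sq : pp a b d ^+ 2 * (P * T) = d ^+ 2 * T.
Proof. by rewrite mulrA -[pp a b d]mul1r sqr_scaled_quot // expr1n mul1r. Qed.

Let thh_sq c : (c * thh a b d) ^+ 2 * (P * T) = c ^+ 2 * d ^+ 2 * P.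
Proof. by rewrite (mulrC P) mulrA sqr_scaled_quot. Qed.

Let pp_ge0 : 0 <= pp a b d.
Proof. by rewrite divr_ge0 ?sqrtr_ge0. Qed.

Let thh_ge0 c : 0 <= c -> 0 <= c * thh a b d.
Proof. by move=> c0; rewrite mulr_ge0 ?divr_ge0 ?sqrtr_ge0. Qed.

Lemma thh_le_pp c : 0 <= c ->
  (c * thh a b d <= pp a b d) = (c ^+ 2 * d ^+ 2 * P <= d ^+ 2 * T).
Proof. by move=> c0; rewrite (cmp_by_squares _ _ (mulr_gt0 P0 T0)).1 ?thh_ge0 ?pp_sq ?thh_sq. Qed.

Lemma pp_le_thh c : 0 <= c ->
  (pp a b d <= c * thh a b d) = (d ^+ 2 * T <= c ^+ 2 * d ^+ 2 * P).
Proof. by move=> c0; rewrite (cmp_by_squares _ _ (mulr_gt0 P0 T0)).1 ?thh_ge0 ?pp_sq ?thh_sq. Qed.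

Lemma pp_lt_thh c : 0 <= c ->
  (pp a b d < c * thh a b d) = (d ^+ 2 * T < c ^+ 2 * d ^+ 2 * P).
Proof. by move=> c0; rewrite (cmp_by_squares _ _ (mulr_gt0 P0 T0)).2 ?thh_ge0 ?pp_sq ?thh_sq. Qed.

End Comparison.

Lemma pp_lower_bound rl a b d : 0 <= rl -> rl <= a -> a < 1 -> rl <= b -> b < 1 ->
  0 <= d -> (1 + rl) / 2 * thh a b d <= pp a b d.
Proof.
move=> rl0 rla a1 rlb b1 d0.
rewrite thh_le_pp ?divr_ge0 ?addr_ge0 //; try lra.
have lo2 : ((1 + rl) / 2) ^+ 2 = (1 + rl) ^+ 2 / 4.
  by rewrite expr_div_n; congr (_ / _); ring.
have ab_ge : (1 + rl) ^+ 2 <= (1 + a) * (1 + b) by nra.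
have lo_le1 : (1 + rl) ^+ 2 <= 4 by nra.
have gap : 0 <= d ^+ 2 * (4 - (1 + rl) ^+ 2)
              + 4 * ((1 - a) * (1 - b) * ((1 + a) * (1 + b) - (1 + rl) ^+ 2)).
  by rewrite addr_ge0 ?mulr_ge0 ?sqr_ge0 ?subr_ge0 //; lra.
rewrite lo2 -subr_ge0.
have -> : d ^+ 2 * (d ^+ 2 + (1 - a ^+ 2) * (1 - b ^+ 2))
  - (1 + rl) ^+ 2 / 4 * d ^+ 2 * (d ^+ 2 + 4 * (1 - a) * (1 - b))
  = d ^+ 2 / 4 * (d ^+ 2 * (4 - (1 + rl) ^+ 2)
      + 4 * ((1 - a) * (1 - b) * ((1 + a) * (1 + b) - (1 + rl) ^+ 2))) by field.
by rewrite mulr_ge0 ?divr_ge0 ?sqr_ge0.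
Qed.

(* The ratio T/P for antipodal-type configurations d = a + b, where the
   denominators become (1 + ab)^2 and (2 - a - b)^2 + 4ab. *)
Definition antipodal_ratio a b := (1 + a * b) ^+ 2 / ((2 - a - b) ^+ 2 + 4 * a * b).

Let antipodal_den_gt0 a b : 0 <= a <= 1 -> 0 <= b <= 1 ->
  0 < (2 - a - b) ^+ 2 + 4 * a * b.
Proof. move=> /andP[a0 a1] /andP[b0 b1]; nra. Qed.

Lemma antipodal_ratioC a b : antipodal_ratio a b = antipodal_ratio b a.
Proof. by rewrite /antipodal_ratio (mulrC a b); congr (_ / _); ring. Qed.

(* The antipodal ratio is nondecreasing in its first argument on [0, 1];
   the cross-multiplied difference factors with visibly nonnegative terms. *)
Lemma antipodal_ratio_mono a A b : 0 <= a -> a <= A -> A <= 1 -> 0 <= b -> b <= 1 ->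
  antipodal_ratio a b <= antipodal_ratio A b.
Proof.
move=> a0 aA A1 b0 b1; rewrite /antipodal_ratio.
rewrite ler_pdivrMr ?antipodal_den_gt0 ?a0 ?b0 ?b1 //=; try lra.
rewrite mulrAC ler_pdivlMr ?antipodal_den_gt0 ?b0 ?b1 //=; try lra.
rewrite -subr_ge0.
have -> : (1 + A * b) ^+ 2 * ((2 - a - b) ^+ 2 + 4 * a * b)
    - (1 + a * b) ^+ 2 * ((2 - A - b) ^+ 2 + 4 * A * b)
  = (A - a) * (1 - b) * ((1 - a) * (1 - b) * (1 + 2 * b - b ^+ 2)
      + (1 - A) * (1 - b) * (1 + 2 * b - b ^+ 2) + 2 * b * (1 + 3 * b) * (1 - a * A)
      + 2 * (1 - b) * (1 + b) ^+ 2) by ring.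
have hb : 0 <= 1 + 2 * b - b ^+ 2 by nra.
have haA : 0 <= 1 - a * A by nra.
apply: mulr_ge0; first by apply: mulr_ge0; lra.
by repeat apply: addr_ge0; repeat apply: mulr_ge0; rewrite ?sqr_ge0 //; lra.
Qed.

(* Hence on the square [0, r]^2 the antipodal ratio is maximal at (r, r). *)
Lemma antipodal_ratio_max a b r : 0 <= a -> a <= r -> 0 <= b -> b <= r -> r <= 1 ->
  antipodal_ratio a b <= (1 + r ^+ 2) ^+ 2 / (4 * (1 - 2 * r + 2 * r ^+ 2)).
Proof.
move=> a0 ar b0 br r1.
have -> : (1 + r ^+ 2) ^+ 2 / (4 * (1 - 2 * r + 2 * r ^+ 2)) = antipodal_ratio r r.
  by rewrite /antipodal_ratio; congr (_ / _); ring.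
apply: (le_trans (antipodal_ratio_mono a0 ar r1 b0 (le_trans br r1))).
rewrite antipodal_ratioC.
by apply: antipodal_ratio_mono; rewrite ?(le_trans a0 ar) //.
Qed.

Definition upper_const r := (1 + r ^+ 2) / (2 * Num.sqrt (1 - 2 * r + 2 * r ^+ 2)).

Let quad_gt0 r : 0 < 1 - 2 * r + 2 * r ^+ 2.
Proof. nra. Qed.

Lemma upper_const_ge0 r : 0 <= upper_const r.
Proof. by rewrite divr_ge0 ?mulr_ge0 ?sqrtr_ge0 ?addr_ge0 ?sqr_ge0. Qed.

Lemma upper_const_sq r :
  upper_const r ^+ 2 = (1 + r ^+ 2) ^+ 2 / (4 * (1 - 2 * r + 2 * r ^+ 2)).
Proof.
rewrite /upper_const expr_div_n exprMn sqr_sqrtr ?ltW //.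
by congr (_ / (_ * _)); rewrite expr2 -natrM.
Qed.

(* The extremal case d = a + b is the
   antipodal ratio, and the squared constant dominates it and is at most 1. *)
Lemma pp_upper_bound ru a b d : 0 <= a -> a <= ru -> 0 <= b -> b <= ru -> ru < 1 ->
  0 <= d -> d <= a + b -> pp a b d <= upper_const ru * thh a b d.
Proof.
move=> a0 aru b0 bru ru1 d0 dab.
rewrite pp_le_thh ?upper_const_ge0 //; try lra.
set M := upper_const ru ^+ 2.
have M_ge : antipodal_ratio a b <= M.
  by rewrite /M upper_const_sq antipodal_ratio_max // ltW.
have M_le1 : M <= 1.
  rewrite /M upper_const_sq ler_pdivrMr ?mulr_gt0 // mul1r -subr_ge0.
  have -> : 4 * (1 - 2 * ru + 2 * ru ^+ 2) - (1 + ru ^+ 2) ^+ 2 = (1 - ru) ^+ 3 * (3 + ru) by ring.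
  by rewrite mulr_ge0 ?exprn_ge0 //; lra.
have Dab : 0 < (2 - a - b) ^+ 2 + 4 * a * b by nra.
have {}M_ge : (1 + a * b) ^+ 2 <= M * ((2 - a - b) ^+ 2 + 4 * a * b).
  by rewrite -ler_pdivrMr.
have d_le : d ^+ 2 <= (a + b) ^+ 2 by rewrite ler_sqr ?nnegrE ?addr_ge0.
have gap : 0 <= (1 - M) * ((a + b) ^+ 2 - d ^+ 2) by rewrite mulr_ge0 ?subr_ge0.
rewrite -subr_ge0.
have -> : M * d ^+ 2 * (d ^+ 2 + 4 * (1 - a) * (1 - b))
    - d ^+ 2 * (d ^+ 2 + (1 - a ^+ 2) * (1 - b ^+ 2))
  = d ^+ 2 * ((1 - M) * ((a + b) ^+ 2 - d ^+ 2)
      + (M * ((2 - a - b) ^+ 2 + 4 * a * b) - (1 + a * b) ^+ 2)) by ring.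
by rewrite mulr_ge0 ?sqr_ge0 // addr_ge0 // subr_ge0.
Qed.

Lemma pp_antipodal r : 0 <= r -> r < 1 -> pp r r (2 * r) = upper_const r * thh r r (2 * r).
Proof.
move=> r0 r1; rewrite /pp /thh /upper_const.
have -> : (2 * r) ^+ 2 + (1 - r ^+ 2) * (1 - r ^+ 2) = (1 + r ^+ 2) ^+ 2 by ring.
have -> : (2 * r) ^+ 2 + 4 * (1 - r) * (1 - r) = 2 ^+ 2 * (1 - 2 * r + 2 * r ^+ 2) by ring.
rewrite sqrtr_sqr ger0_norm ?addr_ge0 ?sqr_ge0 //.
rewrite sqrtrM ?sqr_ge0 // sqrtr_sqr ger0_norm //.
have : 0 < 1 + r ^+ 2 by rewrite ltr_pwDl ?sqr_ge0.
have := quad_gt0 r; rewrite -sqrtr_gt0.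
by move=> q0 s0; field; rewrite !gt_eqF.
Qed.

(* As s -> 0 with r -> rl the ratio p/th tends to (1 + r)/2. *)
Lemma pp_lower_sharp rl ru c : 0 <= rl -> rl <= ru -> ru < 1 -> 0 < ru ->
  (1 + rl) / 2 < c -> exists r s, [/\ 0 < s, s <= r, rl <= r, r <= ru &
    pp r r (2 * s) < c * thh r r (2 * s)].
Proof.
move=> rl0 rlru ru1 ru0 lo_c.
set w := 1 - ru; set delta := 2 * c - (1 + rl).
have w0 : 0 < w by rewrite /w; lra.
have delta0 : 0 < delta by rewrite /delta; lra.
set s := Num.min ru (w * delta / 4); set r := Num.max rl s.
have s0 : 0 < s by rewrite lt_min ru0 divr_gt0 ?mulr_gt0.
have s_ru : s <= ru by rewrite ge_min lexx.
have s_small : s <= w * delta / 4 by rewrite ge_min lexx orbT.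
have s_r : s <= r by rewrite le_max lexx orbT.
have rl_r : rl <= r by rewrite le_max lexx.
have r_ru : r <= ru by rewrite ge_max rlru.
have r_le : r <= rl + s by rewrite ge_max lerDl lerDr rl0 (ltW s0).
exists r, s; split => //.
rewrite pp_lt_thh; try lra.
(* With d = 2s the claim reads c^2 P - T = 4s^2 (c^2 - 1) + (1 - r)^2 (4c^2 - (1+r)^2) > 0;
   the second term dominates since s is small compared with 1 - r and 2c - (1 + r). *)
have far : 3 * delta / 4 <= 2 * c - (1 + r).
  have wd : w * delta <= delta by rewrite ger_pMl // /w; lra.
  have deltaE : delta = 2 * c - (1 + rl) by [].
  lra.
have wr : w ^+ 2 <= (1 - r) ^+ 2 by rewrite /w; nra.
have main : 4 * s ^+ 2 < (1 - r) ^+ 2 * (4 * c ^+ 2 - (1 + r) ^+ 2).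
  have s2 : s ^+ 2 <= (w * delta / 4) ^+ 2.
    by rewrite ler_sqr ?nnegrE ?(ltW s0) ?divr_ge0 ?mulr_ge0 ?(ltW w0) ?(ltW delta0).
  have rhs : w ^+ 2 * (3 * delta / 4 * (2 * c)) <= (1 - r) ^+ 2 * (4 * c ^+ 2 - (1 + r) ^+ 2).
    apply: ler_pM; rewrite ?sqr_ge0 //; first by rewrite !mulr_ge0 //; lra.
    have -> : 4 * c ^+ 2 - (1 + r) ^+ 2 = (2 * c - (1 + r)) * (2 * c + (1 + r)) by ring.
    by apply: ler_pM => //; lra.
  have : 4 * (w * delta / 4) ^+ 2 < w ^+ 2 * (3 * delta / 4 * (2 * c)).
    have -> : 4 * (w * delta / 4) ^+ 2 = w ^+ 2 * (delta ^+ 2 / 4) by field.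
    by rewrite ltr_pM2l ?exprn_gt0 // /delta; nra.
  lra.
have e2 : (2 * s) ^+ 2 = 4 * s ^+ 2 by ring.
rewrite e2 -subr_gt0.
have -> : c ^+ 2 * (4 * s ^+ 2) * (4 * s ^+ 2 + 4 * (1 - r) * (1 - r))
    - 4 * s ^+ 2 * (4 * s ^+ 2 + (1 - r ^+ 2) * (1 - r ^+ 2))
  = 4 * s ^+ 2 * (4 * c ^+ 2 * s ^+ 2 + ((1 - r) ^+ 2 * (4 * c ^+ 2 - (1 + r) ^+ 2) - 4 * s ^+ 2))
  by ring.
rewrite mulr_gt0 ?mulr_gt0 ?exprn_gt0 // ltr_wpDl ?subr_gt0 //.
by apply: mulr_ge0; [apply: mulr_ge0|]; rewrite ?sqr_ge0.
Qed.

End RealInequalities.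

Lemma in_unit_ball (R : realType) (n : nat) (x : 'rV[R]_n) :
  (x \in @unit_ball R n) = (enorm x < 1).
Proof. by apply/idP/idP => [/set_mem|x1]; last exact: mem_set. Qed.

Lemma pB_ball (R : realType) (n : nat) (x y : 'rV[R]_n) : (0 < n)%N ->
  enorm x < 1 -> enorm y < 1 -> pB x y = pp (enorm x) (enorm y) (enorm (x - y)).
Proof. by move=> n0 x1 y1; rewrite /pB !dB_ball // mulrA. Qed.

Lemma th_rho_half_thh (R : realType) (n : nat) (x y : 'rV[R]_n) :
  th_rho_half x y = thh (enorm x) (enorm y) (enorm (x - y)).
Proof. by []. Qed.

Theorem theorem3p4 (R : realType) (n : nat) (rl ru : R) :
  (2 <= n)%N -> 0 <= rl -> rl <= ru -> ru < 1 ->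
  let lo := (1 + rl) / 2 in
  let up := (1 + ru ^+ 2) / (2 * Num.sqrt (1 - 2 * ru + 2 * ru ^+ 2)) in
  let adm := fun x y : 'rV[R]_n =>
    [/\ x \in @unit_ball R n, y \in @unit_ball R n,
        rl <= enorm x, enorm x <= enorm y & enorm y <= ru] in
  (forall x y : 'rV[R]_n, adm x y ->
     lo * th_rho_half x y <= pB x y /\ pB x y <= up * th_rho_half x y) /\
  (0 < ru ->
     (forall c : R, lo < c ->
        exists x y : 'rV[R]_n, [/\ adm x y, x != y & pB x y < c * th_rho_half x y]) /\
     (forall c : R, c < up ->
        exists x y : 'rV[R]_n, [/\ adm x y, x != y & c * th_rho_half x y < pB x y])).
Proof.
move=> n2 rl0 rlru ru1 lo up adm; have n0 : (0 < n)%N by apply: ltnW.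
have adm_sphere x y r : enorm x = r -> enorm y = r -> rl <= r -> r <= ru -> adm x y.
  by move=> xr yr rlr rru; rewrite /adm !in_unit_ball xr yr; split; lra.
split.
  move=> x y [/[!in_unit_ball] x1 y1 rlx xy yru].
  rewrite pB_ball // th_rho_half_thh; have x0 := enorm_ge0 x.
  split; first by apply: pp_lower_bound; rewrite ?enorm_ge0 //; lra.
  by apply: pp_upper_bound; rewrite ?enorm_ge0 ?enorm_subr_le //; lra.
move=> ru0; split=> c c_gt.
  have [r [s [s0 sr rlr rru p_lt]]] := pp_lower_sharp rl0 rlru ru1 ru0 c_gt.
  have [x [y [xr yr dxy xy]]] := chord_points n2 s0 sr.
  exists x, y; split=> //; first exact: adm_sphere xr yr rlr rru.
  by rewrite pB_ball ?th_rho_half_thh ?xr ?yr ?dxy //; lra.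
have [x [y [xr yr dxy xy]]] := chord_points n2 ru0 (lexx ru).
exists x, y; split=> //; first exact: adm_sphere xr yr rlru (lexx ru).
have th0 : 0 < thh ru ru (2 * ru).
  by rewrite divr_gt0 ?mulr_gt0 // sqrtr_gt0 ltr_wpDr ?exprn_gt0 ?mulr_gt0 ?sqr_ge0.
rewrite pB_ball ?th_rho_half_thh ?xr ?yr ?dxy //; try lra.
by rewrite pp_antipodal ?(ltW ru0) // ltr_pM2r.
Qed.
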